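(* Let $A$ be a complex $3$-dimensional binary associative superalgebra of type $(2,1)$. Then either $A$ is associative, or $A$ is isomorphic to $\mathbf{R}_{28}$ or to $\mathbf{R}_{30}$.
   Context: All algebras are over $\mathbb{C}$. A superalgebra is a $\mathbb{Z}_2$-graded algebra $A=A_0\oplus A_1$ with $A_iA_j\subseteq A_{i+j \bmod 2}$; $|x|\in\{0,1\}$ is the degree of a homogeneous $x$. It has type $(n,m)$ if $\dim A_0=n$, $\dim A_1=m$. Isomorphisms are grading-preserving algebra isomorphisms. The associator is $(x,y,z)=(xy)z-x(yz)$; a superalgebra is associative if $(x,y,z)=0$ for all $x,y,z$. A binary associative superalgebra is a superalgebra satisfying $(x,y,z)=-(-1)^{|y||z|}(x,z,y)=-(-1)^{|x||y|}(y,x,z)$ for all homogeneous $x,y,z$. Superalgebras of type $(2,1)$, in basis $e_1,e_2$ (even), $f_1$ (odd), listed by nonzero products (unlisted products are zero): $\mathbf{R}_{28}$: $e_1e_1=e_1,\ e_2e_1=e_2,\ e_1f_1=f_1,\ f_1f_1=e_2$; $\mathbf{R}_{30}$: $e_1e_1=e_1,\ e_1e_2=e_2,\ f_1e_1=f_1,\ f_1f_1=e_2$. *)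

From mathcomp Require Import all_boot all_algebra.
From mathcomp Require Import complex.
From mathcomp Require Import Rstruct.
Set Implicit Arguments.
Unset Strict Implicit.
Unset Printing Implicit Defensive.
Import GRing.Theory.
Local Open Scope ring_scope.

Definition C : numClosedFieldType := Rdefinitions.R[i].

(* Underlying vector space C^3, coordinates w.r.t. the basis e1, e2 (even), f1 (odd). *)
Definition V := 'rV[C]_3.
Definition ie1 : 'I_3 := @Ordinal 3 0 erefl.
Definition ie2 : 'I_3 := @Ordinal 3 1 erefl.
Definition if1 : 'I_3 := @Ordinal 3 2 erefl.

(* Structure constants: c i j k = coefficient of basis vector k in (b_i b_j). *)
Definition sconst := 'I_3 -> 'I_3 -> 'I_3 -> C.

Definition smul (c : sconst) (u v : V) : V :=
  \row_k \sum_(i < 3) \sum_(j < 3) u 0 i * v 0 j * c i j k.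

(* v is homogeneous of degree b (false = even = span(e1,e2), true = odd = span(f1)). *)
Definition homog (b : bool) (v : V) : Prop :=
  if b then v 0 ie1 = 0 /\ v 0 ie2 = 0 else v 0 if1 = 0.

Definition graded (c : sconst) : Prop :=
  forall (a b : bool) (u v : V), homog a u -> homog b v -> homog (a (+) b) (smul c u v).

Definition assoc (c : sconst) (x y z : V) : V :=
  smul c (smul c x y) z - smul c x (smul c y z).

Definition associative_sa (c : sconst) : Prop :=
  forall x y z : V, assoc c x y z = 0.

(* (-1)^(|x||y|) *)
Definition sgn (b : bool) : C := if b then -1 else 1.

Definition binary_associative (c : sconst) : Prop :=
  forall (a b d : bool) (x y z : V), homog a x -> homog b y -> homog d z ->
    assoc c x y z = - (sgn (b && d)) *: assoc c x z y /\
    assoc c x y z = - (sgn (a && b)) *: assoc c y x z.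

(* Grading-preserving algebra isomorphism (row-vector convention: v |-> v *m P). *)
Definition sa_iso (c c' : sconst) : Prop :=
  exists P : 'M[C]_3, P \in unitmx /\
    (forall (b : bool) (v : V), homog b v -> homog b (v *m P)) /\
    (forall u v : V, smul c u v *m P = smul c' (u *m P) (v *m P)).

(* R28: e1e1=e1, e2e1=e2, e1f1=f1, f1f1=e2. *)
Definition R28 : sconst := fun i j k =>
  match nat_of_ord i, nat_of_ord j, nat_of_ord k with
  | 0, 0, 0 => 1
  | 1, 0, 1 => 1
  | 0, 2, 2 => 1
  | 2, 2, 1 => 1
  | _, _, _ => 0
  end.

(* R30: e1e1=e1, e1e2=e2, f1e1=f1, f1f1=e2. *)
Definition R30 : sconst := fun i j k =>
  match nat_of_ord i, nat_of_ord j, nat_of_ord k with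
  | 0, 0, 0 => 1
  | 0, 1, 1 => 1
  | 2, 0, 2 => 1
  | 2, 2, 1 => 1
  | _, _, _ => 0
  end.

(* Write the odd part as C f1 and d := f1 f1.  The grading gives linear forms
   lam, rho on the even part A0 with x f1 = lam x f1 and f1 x = rho x f1.  Binary
   associativity makes lam and rho multiplicative, gives x d = rho x d and
   d x = lam x d, kills the associators (e, f1, e'), (e, e', f1), (f1, e, e'), and
   makes the even associator alternating, hence zero on the plane A0; the remaining
   associators are multiples of (rho - lam) d.  So A is associative unless d != 0
   and lam != rho on A0.  Then lam d = rho d = 0, and an even u with lam u = 1
   spans A0 together with d, whence rho = rho u * lam with rho u in {0, 1}: either
   rho = 0, or lam = 0.  If rho = 0, the vanishing of (u, u, u) forces u u = u, and
   u, d, f1 multiply like e1, e2, f1 in R28.  The case lam = 0 is the case rho = 0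
   of the opposite superalgebra, and the opposite of R28 is R30. *)

From HB Require Import structures.
From mathcomp Require Import all_boot all_algebra.
From mathcomp Require Import complex.
From mathcomp Require Import Rstruct.
From mathcomp Require Import ring.
From Stdlib Require Import Classical FunctionalExtensionality.
Set Implicit Arguments. Unset Strict Implicit. Unset Printing Implicit Defensive.
Import GRing.Theory Num.Theory.
Local Open Scope ring_scope.

Definition f1 : V := 'e_if1.

Lemma ord3P (i : 'I_3) : [\/ i = ie1, i = ie2 | i = if1].
Proof.
by case: i => [[|[|[|//]]] ?]; [apply: Or31 | apply: Or32 | apply: Or33]; exact: val_inj.
Qed.

Lemma big_ord3 (R : nmodType) (F : 'I_3 -> R) : \sum_(k < 3) F k = F ie1 + F ie2 + F if1.
Proof.
rewrite !big_ord_recl big_ord0 addr0 addrA.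
by congr (F _ + F _ + F _); apply: val_inj.
Qed.

Lemma ord3_even_repeat i j k : i != if1 -> j != if1 -> k != if1 ->
  [\/ i = j, i = k | j = k].
Proof.
by case: (ord3P i) => ->; case: (ord3P j) => ->; case: (ord3P k) => -> //= *;
  first [exact: Or31 | exact: Or32 | exact: Or33].
Qed.

Section Bilinear.
Variable c : sconst.

Lemma smulDl u v w : smul c (u + v) w = smul c u w + smul c v w.
Proof.
apply/rowP => k; rewrite !mxE -big_split; apply: eq_bigr => i _.
by rewrite -big_split; apply: eq_bigr => j _; rewrite !mxE !mulrDl.
Qed.

Lemma smulDr u v w : smul c w (u + v) = smul c w u + smul c w v.
Proof.
apply/rowP => k; rewrite !mxE -big_split; apply: eq_bigr => i _.
by rewrite -big_split; apply: eq_bigr => j _; rewrite !mxE mulrDr !mulrDl.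
Qed.

Lemma smulZl a u w : smul c (a *: u) w = a *: smul c u w.
Proof.
apply/rowP => k; rewrite !mxE mulr_sumr; apply: eq_bigr => i _.
by rewrite mulr_sumr; apply: eq_bigr => j _; rewrite !mxE -!mulrA.
Qed.

Lemma smulZr a u w : smul c w (a *: u) = a *: smul c w u.
Proof.
apply/rowP => k; rewrite !mxE mulr_sumr; apply: eq_bigr => i _.
by rewrite mulr_sumr; apply: eq_bigr => j _; rewrite !mxE; ring.
Qed.

Lemma smul0l w : smul c 0 w = 0.
Proof. by have := smulZl 0 0 w; rewrite !scale0r. Qed.

Lemma smul0r w : smul c w 0 = 0.
Proof. by have := smulZr 0 0 w; rewrite !scale0r. Qed.

Lemma smul_suml I r (P : pred I) (F : I -> V) w :
  smul c (\sum_(i <- r | P i) F i) w = \sum_(i <- r | P i) smul c (F i) w.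
Proof. exact: (big_morph _ (fun u v => smulDl u v w) (smul0l w)). Qed.

Lemma smul_sumr I r (P : pred I) (F : I -> V) w :
  smul c w (\sum_(i <- r | P i) F i) = \sum_(i <- r | P i) smul c w (F i).
Proof. exact: (big_morph _ (fun u v => smulDr u v w) (smul0r w)). Qed.

Lemma assocDl u v y z : assoc c (u + v) y z = assoc c u y z + assoc c v y z.
Proof. by rewrite /assoc !smulDl opprD addrACA. Qed.

Lemma assocDm u v x z : assoc c x (u + v) z = assoc c x u z + assoc c x v z.
Proof. by rewrite /assoc smulDr !smulDl !smulDr opprD addrACA. Qed.

Lemma assocDr u v x y : assoc c x y (u + v) = assoc c x y u + assoc c x y v.
Proof. by rewrite /assoc !smulDr opprD addrACA. Qed.

Lemma assocZl a u y z : assoc c (a *: u) y z = a *: assoc c u y z.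
Proof. by rewrite /assoc !smulZl scalerBr. Qed.

Lemma assocZm a u x z : assoc c x (a *: u) z = a *: assoc c x u z.
Proof. by rewrite /assoc smulZr !smulZl !smulZr scalerBr. Qed.

Lemma assocZr a u x y : assoc c x y (a *: u) = a *: assoc c x y u.
Proof. by rewrite /assoc !smulZr scalerBr. Qed.

Lemma assoc0l y z : assoc c 0 y z = 0.
Proof. by have := assocZl 0 0 y z; rewrite !scale0r. Qed.

Lemma assoc0m x z : assoc c x 0 z = 0.
Proof. by have := assocZm 0 0 x z; rewrite !scale0r. Qed.

Lemma assoc0r x y : assoc c x y 0 = 0.
Proof. by have := assocZr 0 0 x y; rewrite !scale0r. Qed.

Lemma associative_sa_basis :
  (forall i j k, assoc c 'e_i 'e_j 'e_k = 0) -> associative_sa c.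
Proof.
move=> H x y z; rewrite (row_sum_delta x).
rewrite (big_morph _ (fun u v => assocDl u v y z) (assoc0l y z)) big1 // => i _.
rewrite assocZl (row_sum_delta y) (big_morph _ (fun u v => assocDm u v 'e_i z) (assoc0m _ z)).
rewrite big1 ?scaler0 // => j _.
rewrite assocZm (row_sum_delta z) (big_morph _ (fun u v => assocDr u v 'e_i 'e_j) (assoc0r _ _)).
by rewrite big1 ?scaler0 // => k _; rewrite assocZr H scaler0.
Qed.
End Bilinear.

Lemma homog_delta i : homog (i == if1) 'e_i.
Proof. by case: (ord3P i) => ->; rewrite /homog !mxE. Qed.

Lemma homog_delta_even i : i != if1 -> homog false 'e_i.
Proof. by move=> i_even; have := homog_delta i; rewrite (negbTE i_even). Qed.

Lemma homog_f1 : homog true f1.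
Proof. exact: (homog_delta if1). Qed.

Lemma homogD b u v : homog b u -> homog b v -> homog b (u + v).
Proof. by case: b => /=; rewrite !mxE; [case=> -> -> [-> ->] | move=> -> ->]; rewrite addr0. Qed.

Lemma homogZ b a v : homog b v -> homog b (a *: v).
Proof. by case: b => /=; rewrite !mxE; [case=> -> -> | move=> ->]; rewrite mulr0. Qed.

Lemma homogN b v : homog b v -> homog b (- v).
Proof. by rewrite -scaleN1r; apply: homogZ. Qed.

Lemma homogB b u v : homog b u -> homog b v -> homog b (u - v).
Proof. by move=> hu hv; apply: homogD hu (homogN hv). Qed.

Lemma homog_odd v : homog true v -> v = v 0 if1 *: f1.
Proof.
case=> v1 v2; apply/rowP => k; rewrite !mxE.
by case: (ord3P k) => ->; rewrite ?v1 ?v2 /= ?mulr0 ?mulr1.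
Qed.

Lemma scale_f1_inj : injective (fun a : C => a *: f1).
Proof. by move=> a b /(congr1 (fun v : V => v 0 if1)); rewrite !mxE eqxx !mulr1. Qed.

Lemma homog_eq0 b v : homog b v -> homog (~~ b) v -> v = 0.
Proof.
have odd_even w : homog true w -> homog false w -> w = 0.
  by move=> /homog_odd wE hw; rewrite wE (hw : w 0 if1 = 0) scale0r.
by case: b => h1 h2; [exact: odd_even | exact: odd_even h2 h1].
Qed.

Lemma homog_split b (v : V) : exists2 w, homog b w & homog (~~ b) (v - w).
Proof.
have hf : homog true (v 0 if1 *: f1) by apply: homogZ homog_f1.
have he : homog false (v - v 0 if1 *: f1) by rewrite /homog !mxE eqxx mulr1 subrr.
case: b; [exists (v 0 if1 *: f1) | exists (v - v 0 if1 *: f1)] => //.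
by rewrite opprB addrC subrK.
Qed.

Definition opposite (c : sconst) : sconst := fun i j k => c j i k.

Lemma smul_opposite c u v : smul (opposite c) u v = smul c v u.
Proof.
apply/rowP => k; rewrite !mxE exchange_big; apply: eq_bigr => i _.
by apply: eq_bigr => j _; rewrite /opposite (mulrC (u 0 j)).
Qed.

Lemma assoc_opposite c x y z : assoc (opposite c) x y z = - assoc c z y x.
Proof. by rewrite /assoc !(smul_opposite c) opprB. Qed.

Lemma graded_opposite c : graded c -> graded (opposite c).
Proof. by move=> gr a b u v hu hv; rewrite smul_opposite addbC; apply: gr. Qed.

Lemma binary_associative_opposite c :
  binary_associative c -> binary_associative (opposite c).
Proof.
move=> ba a b d x y z hx hy hz; rewrite !(assoc_opposite c) !scalerN.
have [E1 E2] := ba d b a z y x hz hy hx.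
by split; congr (- _); [rewrite E2 andbC | rewrite E1 andbC].
Qed.

Lemma sa_iso_opposite c c' : sa_iso (opposite c) c' -> sa_iso c (opposite c').
Proof.
case=> P [Pu [Phom Pmul]]; exists P; do 2!split => //.
by move=> u v; rewrite (smul_opposite c') -Pmul (smul_opposite c).
Qed.

Lemma opposite_R28 : opposite R28 = R30.
Proof.
apply: functional_extensionality => i; apply: functional_extensionality => j.
apply: functional_extensionality => k.
by case: i => [[|[|[|?]]] ?]; case: j => [[|[|[|?]]] ?]; case: k => [[|[|[|?]]] ?].
Qed.

Lemma homog_invmx (Q : 'M[C]_3) : Q \in unitmx ->
  (forall b v, homog b v -> homog b (v *m Q)) ->
  forall b v, homog b v -> homog b (v *m invmx Q).
Proof.
move=> Qu Qhom b v hv; set w := v *m invmx Q.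
have [w1 hw1 hw2] := homog_split b w.
suff w2_0 : w - w1 = 0 by rewrite -[w](subrK w1) w2_0 add0r.
have Qfree : row_free Q by rewrite row_free_unit.
apply: (row_free_inj Qfree); rewrite mul0mx; apply: homog_eq0 (Qhom _ _ hw2).
by rewrite mulmxBl mulmxKV //; apply: homogB hv (Qhom _ _ hw1).
Qed.

Section IsoFromBasis.
Variables (c c' : sconst) (Q : 'M[C]_3).
Hypothesis Qmul : forall i j, smul c (row i Q) (row j Q) = \sum_k c' i j k *: row k Q.

Lemma smul_mulmx x y : smul c (x *m Q) (y *m Q) = smul c' x y *m Q.
Proof.
rewrite !mulmx_sum_row smul_suml.
under eq_bigr => i _ do rewrite smulZl smul_sumr scaler_sumr.
under eq_bigr => i _ do under eq_bigr => j _ do rewrite smulZr Qmul scalerA scaler_sumr.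
under [RHS]eq_bigr => k _ do rewrite /smul mxE scaler_suml.
rewrite [RHS]exchange_big; apply: eq_bigr => i _.
under [RHS]eq_bigr => k _ do rewrite scaler_suml.
rewrite [RHS]exchange_big; apply: eq_bigr => j _.
by apply: eq_bigr => k _; rewrite scalerA.
Qed.

Lemma sa_iso_basis : Q \in unitmx ->
  (forall b v, homog b v -> homog b (v *m Q)) -> sa_iso c c'.
Proof.
move=> Qu Qhom; exists (invmx Q); split; first by rewrite unitmx_inv.
split; first exact: homog_invmx.
move=> u v; rewrite -[in LHS](mulmxKV Qu u) -[in LHS](mulmxKV Qu v).
by rewrite smul_mulmx mulmxK.
Qed.
End IsoFromBasis.

Definition basis_mx (x y z : V) : 'M[C]_3 := \matrix_(i, j) [:: x; y; z]`_i 0 j.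

Lemma row_basis_mx x y z i : row i (basis_mx x y z) = [:: x; y; z]`_i.
Proof. by apply/rowP => j; rewrite !mxE. Qed.

Lemma mul_basis_mx x y z v :
  v *m basis_mx x y z = v 0 ie1 *: x + v 0 ie2 *: y + v 0 if1 *: z.
Proof. by rewrite mulmx_sum_row big_ord3 !row_basis_mx. Qed.

Lemma even_decomp x : homog false x -> x = x 0 ie1 *: 'e_ie1 + x 0 ie2 *: 'e_ie2.
Proof.
move=> hx; apply/rowP => k; rewrite !mxE.
by case: (ord3P k) => ->; rewrite ?(hx : x 0 if1 = 0) /= ?mulr1 ?mulr0 ?addr0 ?add0r.
Qed.

Lemma scalar_even (phi : {scalar V}) x :
  homog false x -> phi x = x 0 ie1 * phi 'e_ie1 + x 0 ie2 * phi 'e_ie2.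
Proof. by move=> hx; rewrite {1}(even_decomp hx) linearD !scalarZ. Qed.

Lemma orthogonal_colinear (F : fieldType) (p1 p2 z1 z2 d1 d2 : F) :
  (p1 != 0) || (p2 != 0) -> z1 * p1 + z2 * p2 = 0 -> d1 * p1 + d2 * p2 = 0 ->
  z1 * d2 = z2 * d1.
Proof.
move=> p_nz zp dp; apply/eqP; rewrite -subr_eq0.
have E1 : p1 * (z1 * d2 - z2 * d1) = d2 * (z1 * p1 + z2 * p2) - z2 * (d1 * p1 + d2 * p2)
  by ring.
have E2 : p2 * (z1 * d2 - z2 * d1) = z1 * (d1 * p1 + d2 * p2) - d1 * (z1 * p1 + z2 * p2)
  by ring.
rewrite zp dp !mulr0 subrr in E1 E2.
by case/orP: p_nz => p_nz; [move/eqP: E1 | move/eqP: E2]; rewrite mulf_eq0 (negbTE p_nz).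
Qed.

Lemma colinear_even z d : homog false z -> homog false d -> d != 0 ->
  z 0 ie1 * d 0 ie2 = z 0 ie2 * d 0 ie1 -> exists t, z = t *: d.
Proof.
move=> hz hd d_nz col; rewrite (even_decomp hz) (even_decomp hd).
have [d1_0 | d1_nz] := eqVneq (d 0 ie1) 0.
- have d2_nz : d 0 ie2 != 0.
    by apply: contraNneq d_nz => d2_0; rewrite (even_decomp hd) d1_0 d2_0 !scale0r addr0.
  move: col; rewrite d1_0 mulr0 => /eqP; rewrite mulf_eq0 (negbTE d2_nz) orbF => /eqP ->.
  by exists (z 0 ie2 / d 0 ie2); rewrite scalerDr !scalerA mulr0 divfK.
- exists (z 0 ie1 / d 0 ie1); rewrite scalerDr !scalerA divfK //.
  by rewrite mulrAC col mulfK.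
Qed.

Lemma even_plane_decomp (phi : {scalar V}) u d x :
  homog false u -> homog false d -> homog false x -> d != 0 -> phi u = 1 -> phi d = 0 ->
  exists t, x = phi x *: u + t *: d.
Proof.
move=> hu hd hx d_nz phi_u phi_d.
have hz : homog false (x - phi x *: u) by apply: homogB hx (homogZ _ hu).
suff [t zE] : exists t, x - phi x *: u = t *: d by exists t; rewrite -zE addrC subrK.
apply: (colinear_even hz hd d_nz).
have p_nz : (phi 'e_ie1 != 0) || (phi 'e_ie2 != 0).
  apply: contraPT phi_u; rewrite negb_or !negbK => /andP [/eqP p1 /eqP p2].
  by rewrite scalar_even // p1 p2 !mulr0 addr0 => /eqP; rewrite eq_sym oner_eq0.
apply: orthogonal_colinear p_nz _ _; rewrite -scalar_even //.
by rewrite linearB scalarZ phi_u mulr1 subrr.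
Qed.

Definition lam (c : sconst) (x : V) : C := smul c x f1 0 if1.
Definition rho (c : sconst) (x : V) : C := smul c f1 x 0 if1.
Definition f1sq (c : sconst) : V := smul c f1 f1.

Fact lam_is_scalar c : scalar (lam c).
Proof. by move=> a u v; rewrite /lam smulDl smulZl !mxE. Qed.
HB.instance Definition _ c := GRing.isLinear.Build C V C *%R (lam c) (lam_is_scalar c).

Fact rho_is_scalar c : scalar (rho c).
Proof. by move=> a u v; rewrite /rho smulDr smulZr !mxE. Qed.
HB.instance Definition _ c := GRing.isLinear.Build C V C *%R (rho c) (rho_is_scalar c).

Lemma lam_opposite c x : lam (opposite c) x = rho c x.
Proof. by rewrite /lam smul_opposite. Qed.

Lemma rho_opposite c x : rho (opposite c) x = lam c x.
Proof. by rewrite /rho smul_opposite. Qed.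

Lemma f1sq_opposite c : f1sq (opposite c) = f1sq c.
Proof. exact: smul_opposite. Qed.

Section Graded.
Variable c : sconst.
Hypothesis c_graded : graded c.
Local Notation lam := (lam c).
Local Notation rho := (rho c).
Local Notation d := (f1sq c).

Lemma smul_even x y : homog false x -> homog false y -> homog false (smul c x y).
Proof. exact: c_graded. Qed.

Lemma f1sq_even : homog false d.
Proof. exact: c_graded homog_f1 homog_f1. Qed.

Lemma smul_even_f1 x : homog false x -> smul c x f1 = lam x *: f1.
Proof. by move=> hx; apply: homog_odd; apply: c_graded hx homog_f1. Qed.

Lemma smul_f1_even x : homog false x -> smul c f1 x = rho x *: f1.
Proof. by move=> hx; apply: homog_odd; apply: c_graded homog_f1 hx. Qed.

Lemma assoc_even_f1_even x y : homog false x -> homog false y -> assoc c x f1 y = 0.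
Proof.
move=> hx hy; rewrite /assoc (smul_even_f1 hx) (smul_f1_even hy) smulZl smulZr.
by rewrite (smul_even_f1 hx) (smul_f1_even hy) !scalerA mulrC subrr.
Qed.

Lemma assoc_f1_even_f1 x : homog false x -> assoc c f1 x f1 = (rho x - lam x) *: d.
Proof.
by move=> hx; rewrite /assoc (smul_even_f1 hx) (smul_f1_even hx) smulZl smulZr scalerBl.
Qed.

Lemma assoc_f1_f1_f1 : assoc c f1 f1 f1 = (lam d - rho d) *: f1.
Proof. by rewrite /assoc -/d (smul_even_f1 f1sq_even) (smul_f1_even f1sq_even) scalerBl. Qed.

Section BinaryAssociative.
Hypothesis c_binassoc : binary_associative c.

Lemma assoc_even_even_f1 x y : homog false x -> homog false y -> assoc c x y f1 = 0.
Proof.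
move=> hx hy; have [-> _] := c_binassoc hx hy homog_f1.
by rewrite assoc_even_f1_even // scaler0.
Qed.

Lemma assoc_f1_even_even x y : homog false x -> homog false y -> assoc c f1 x y = 0.
Proof.
move=> hx hy; have [_ ->] := c_binassoc homog_f1 hx hy.
by rewrite assoc_even_f1_even // scaler0.
Qed.

Lemma assoc_even_f1_f1 x : homog false x -> assoc c x f1 f1 = - assoc c f1 x f1.
Proof. by move=> hx; have [_ ->] := c_binassoc hx homog_f1 homog_f1; rewrite scaleN1r. Qed.

Lemma assoc_f1_f1_even x : homog false x -> assoc c f1 f1 x = - assoc c f1 x f1.
Proof. by move=> hx; have [-> _] := c_binassoc homog_f1 homog_f1 hx; rewrite scaleN1r. Qed.

Lemma assoc_even_repeat x y : homog false x -> homog false y ->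
  [/\ assoc c x x y = 0, assoc c x y x = 0 & assoc c x y y = 0].
Proof.
have selfopp (v : V) : v = - v -> v = 0.
  move=> vE; have : 2%:R *: v = 0 by rewrite scaler_nat mulr2n {1}vE addNr.
  by move/eqP; rewrite scaler_eq0 pnatr_eq0 /= => /eqP.
move=> hx hy.
have xxy : assoc c x x y = 0.
  by apply: selfopp; have [_ E] := c_binassoc hx hx hy; rewrite {1}E scaleN1r.
have xyy : assoc c x y y = 0.
  by apply: selfopp; have [E _] := c_binassoc hx hy hy; rewrite {1}E scaleN1r.
have yxx : assoc c y x x = 0.
  by apply: selfopp; have [E _] := c_binassoc hy hx hx; rewrite {1}E scaleN1r.
by split=> //; have [_ ->] := c_binassoc hx hy hx; rewrite yxx scaler0.
Qed.

Lemma lam_mul x y : homog false x -> homog false y -> lam (smul c x y) = lam x * lam y.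
Proof.
move=> hx hy; apply: scale_f1_inj => /=.
have /eqP := assoc_even_even_f1 hx hy; rewrite subr_eq0 => /eqP E.
rewrite -(smul_even_f1 (smul_even hx hy)) E (smul_even_f1 hy) smulZr (smul_even_f1 hx).
by rewrite scalerA mulrC.
Qed.

Lemma rho_mul x y : homog false x -> homog false y -> rho (smul c x y) = rho x * rho y.
Proof.
move=> hx hy; apply: scale_f1_inj => /=.
have /eqP := assoc_f1_even_even hx hy; rewrite subr_eq0 => /eqP E.
rewrite -(smul_f1_even (smul_even hx hy)) -E (smul_f1_even hx) smulZl (smul_f1_even hy).
by rewrite scalerA.
Qed.

Lemma smul_even_f1sq x : homog false x -> smul c x d = rho x *: d.
Proof.
move=> hx; have E := assoc_even_f1_f1 hx.
rewrite assoc_f1_even_f1 // /assoc (smul_even_f1 hx) smulZl -/d in E.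
have -> : smul c x d = lam x *: d - (lam x *: d - smul c x d) by rewrite opprB addrC subrK.
by rewrite E opprK -scalerDl addrC subrK.
Qed.

Lemma smul_f1sq_even x : homog false x -> smul c d x = lam x *: d.
Proof.
move=> hx; have E := assoc_f1_f1_even hx.
rewrite assoc_f1_even_f1 // /assoc (smul_f1_even hx) smulZr -/d in E.
have -> : smul c d x = (smul c d x - rho x *: d) + rho x *: d by rewrite subrK.
by rewrite E -scaleNr -scalerDl opprB subrK.
Qed.

Lemma associative_of_degenerate :
  d = 0 \/ (forall x, homog false x -> lam x = rho x) -> associative_sa c.
Proof.
move=> deg.
have fef x : homog false x -> assoc c f1 x f1 = 0.
  move=> hx; rewrite assoc_f1_even_f1 //.
  by case: deg => [-> | lr]; rewrite ?scaler0 // (lr _ hx) subrr scale0r.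
have fff : assoc c f1 f1 f1 = 0.
  rewrite assoc_f1_f1_f1; case: deg => [-> | lr]; first by rewrite !linear0 addr0 scale0r.
  by rewrite (lr _ f1sq_even) subrr scale0r.
apply: associative_sa_basis => i j k.
have [-> | /[dup] i_even /homog_delta_even hi] := eqVneq i if1;
have [-> | /[dup] j_even /homog_delta_even hj] := eqVneq j if1;
have [-> | /[dup] k_even /homog_delta_even hk] := eqVneq k if1.
- exact: fff.
- by rewrite assoc_f1_f1_even // fef // oppr0.
- exact: fef.
- exact: assoc_f1_even_even.
- by rewrite assoc_even_f1_f1 // fef // oppr0.
- exact: assoc_even_f1_even.
- exact: assoc_even_even_f1.
case: (ord3_even_repeat i_even j_even k_even) => [<- | <- | <-].
- by case: (assoc_even_repeat hi hk).
- by case: (assoc_even_repeat hi hj).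
- by case: (assoc_even_repeat hi hj).
Qed.

Section NonDegenerate.
Variable e : V.
Hypotheses (e_even : homog false e) (lam_rho_e : lam e != rho e).

Lemma lam_f1sq : lam d = 0.
Proof.
have : (lam e - rho e) * lam d = 0.
  by rewrite mulrBl -(lam_mul e_even f1sq_even) smul_even_f1sq // scalarZ subrr.
by move/eqP; rewrite mulf_eq0 subr_eq0 (negbTE lam_rho_e) => /eqP.
Qed.

Lemma rho_f1sq : rho d = 0.
Proof.
have : (rho e - lam e) * rho d = 0.
  by rewrite mulrBl mulrC -(rho_mul f1sq_even e_even) smul_f1sq_even // scalarZ subrr.
by move/eqP; rewrite mulf_eq0 subr_eq0 eq_sym (negbTE lam_rho_e) => /eqP.
Qed.

Lemma rho_even_eq0 u : d != 0 -> homog false u -> lam u = 1 ->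
  forall x, homog false x -> rho x = 0.
Proof.
move=> d_nz hu lam_u.
have rho_lam x : homog false x -> rho x = lam x * rho u.
  move=> hx; have [t ->] := even_plane_decomp hu f1sq_even hx d_nz lam_u lam_f1sq.
  by rewrite !linearD !scalarZ /= lam_u lam_f1sq rho_f1sq !mulr0 !addr0 mulr1.
have : rho u * (rho u - 1) = 0.
  have := rho_lam _ (smul_even hu hu); rewrite rho_mul // lam_mul // lam_u !mul1r => E.
  by rewrite mulrBr mulr1 E subrr.
move/eqP; rewrite mulf_eq0 subr_eq0 => /orP [/eqP rho_u0 | /eqP rho_u1] x hx.
- by rewrite rho_lam // rho_u0 mulr0.
- by move: lam_rho_e; rewrite (rho_lam _ e_even) rho_u1 mulr1 eqxx.
Qed.

Lemma lam1_idempotent u : d != 0 -> homog false u -> lam u = 1 -> smul c u u = u.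
Proof.
move=> d_nz hu lam_u.
have [t uuE] := even_plane_decomp hu f1sq_even (smul_even hu hu) d_nz lam_u lam_f1sq.
rewrite /= lam_mul // lam_u mulr1 scale1r in uuE.
suff : t *: d = 0.
  by move/eqP; rewrite scaler_eq0 (negbTE d_nz) orbF => /eqP t0; rewrite uuE t0 scale0r addr0.
have [<- _ _] := assoc_even_repeat hu hu.
rewrite /assoc uuE smulDl smulDr smulZl smulZr (smul_f1sq_even hu) (smul_even_f1sq hu).
by rewrite lam_u (rho_even_eq0 d_nz hu lam_u hu) scale1r scale0r scaler0 addr0 addrC addKr.
Qed.

Lemma sa_iso_R28 : d != 0 -> lam e != 0 -> sa_iso c R28.
Proof.
move=> d_nz lam_e_nz.
have [u hu lam_u] : exists2 u, homog false u & lam u = 1.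
  by exists ((lam e)^-1 *: e); [apply: homogZ | rewrite scalarZ mulVf].
have rho0 := rho_even_eq0 d_nz hu lam_u.
apply: (sa_iso_basis (Q := basis_mx u d f1)).
- move=> i j; rewrite big_ord3 !row_basis_mx.
  have hd := f1sq_even.
  case: (ord3P i) => ->; case: (ord3P j) => -> /=;
    rewrite /R28 /= ?scale0r ?scale1r ?addr0 ?add0r.
  + exact: lam1_idempotent.
  + by rewrite (smul_even_f1sq hu) rho0 // scale0r.
  + by rewrite (smul_even_f1 hu) lam_u scale1r.
  + by rewrite (smul_f1sq_even hu) lam_u scale1r.
  + by rewrite (smul_f1sq_even hd) lam_f1sq scale0r.
  + by rewrite (smul_even_f1 hd) lam_f1sq scale0r.
  + by rewrite (smul_f1_even hu) rho0 // scale0r.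
  + by rewrite (smul_f1_even hd) rho_f1sq scale0r.
  + by [].
- rewrite -row_free_unit; apply: inj_row_free => v; rewrite mul_basis_mx => vQ.
  have v3 : v 0 if1 = 0.
    apply: scale_f1_inj; rewrite /= scale0r; apply: (homog_eq0 (b := true)).
      exact: homogZ homog_f1.
    rewrite -[_ *: f1](addKr (v 0 ie1 *: u + v 0 ie2 *: d)) vQ addr0.
    by apply/homogN/homogD; apply: homogZ; [exact: hu | exact: f1sq_even].
  rewrite v3 scale0r addr0 in vQ.
  have v1 : v 0 ie1 = 0.
    by move/(congr1 lam): vQ; rewrite linearD !scalarZ /= lam_u lam_f1sq linear0 mulr0 addr0 mulr1.
  rewrite v1 scale0r add0r in vQ.
  have v2 : v 0 ie2 = 0 by move/eqP: vQ; rewrite scaler_eq0 (negbTE d_nz) orbF => /eqP.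
  by apply/rowP => k; rewrite mxE; case: (ord3P k) => ->.
- case=> v; rewrite mul_basis_mx; [case=> -> -> | move=> ->].
  + by rewrite !scale0r !add0r; apply: homogZ homog_f1.
  + by rewrite scale0r addr0; apply: homogD; apply: homogZ; [exact: hu | exact: f1sq_even].
Qed.
End NonDegenerate.
End BinaryAssociative.
End Graded.

Theorem mainTheorem20 (c : sconst) :
  graded c -> binary_associative c ->
  associative_sa c \/ sa_iso c R28 \/ sa_iso c R30.
Proof.
move=> gr ba.
case: (classic (f1sq c = 0 \/ forall x, homog false x -> lam c x = rho c x)) => [deg | ].
  by left; apply: associative_of_degenerate.
case/not_or_and => /eqP d_nz /not_all_ex_not [e not_lr].
have [e_even /eqP lam_rho_e] := imply_to_and _ _ not_lr.
right; have [lam_e0 | lam_e_nz] := eqVneq (lam c e) 0; last first.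
  by left; exact (sa_iso_R28 gr ba e_even lam_rho_e d_nz lam_e_nz).
right; rewrite -opposite_R28; apply: sa_iso_opposite.
have lr' : lam (opposite c) e != rho (opposite c) e.
  by rewrite (lam_opposite c) (rho_opposite c) eq_sym.
have d' : f1sq (opposite c) != 0 by rewrite (f1sq_opposite c).
have l' : lam (opposite c) e != 0 by rewrite (lam_opposite c) -lam_e0 eq_sym.
exact (sa_iso_R28 (graded_opposite gr) (binary_associative_opposite ba) e_even lr' d' l').
Qed.
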